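(* Let $H$ be a graph with a cut edge $e=(u,w)$. Then for every pattern $\mathbf{s}$ with $N(H)\mathbf{s}=\mathbf{1}$, either $\mathbf{s}(u)=0$ or $\mathbf{s}(w)=0$.
   Context: For a finite simple graph $H$ with vertex set $\{v_1,\dots,v_n\}$, the closed adjacency matrix $N(H)$ is the $n\times n$ matrix over $\mathbb{Z}_2$ whose $(i,j)$ entry is $1$ iff $i=j$ or $v_i$ is adjacent to $v_j$; patterns are vectors in $\mathbb{Z}_2^{V(H)}$ and $\mathbf{1}$ is the all-ones vector. A cut edge is an edge whose deletion increases the number of connected components. *)

From mathcomp Require Import all_boot all_order all_algebra.
Set Implicit Arguments. Unset Strict Implicit. Unset Printing Implicit Defensive.
Import GRing.Theory.
Local Open Scope ring_scope.

Definition simple_graph (n : nat) (g : rel 'I_n) : Prop :=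
  symmetric g /\ irreflexive g.

Definition closed_adj (n : nat) (g : rel 'I_n) : 'M['F_2]_n :=
  \matrix_(i, j) ((i == j) || g i j)%:R.

Definition component (n : nat) (g : rel 'I_n) (x : 'I_n) : {set 'I_n} :=
  [set y | connect g x y].
Definition num_components (n : nat) (g : rel 'I_n) : nat :=
  #|[set component g x | x : 'I_n]|.

Definition delete_edge (n : nat) (g : rel 'I_n) (u w : 'I_n) : rel 'I_n :=
  fun x y => g x y && ~~ (((x == u) && (y == w)) || ((x == w) && (y == u))).

Definition cut_edge (n : nat) (g : rel 'I_n) (u w : 'I_n) : Prop :=
  g u w /\ (num_components g < num_components (delete_edge g u w))%N.

(* Let C be the component of u once the cut edge uw is deleted; then uw is the
   only edge of H leaving C.  Summing the rows of N(H)s = 1 over C, weighted by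
   s, gives sum_(x in C) s(x) on one side; on the other side the quadratic form
   of the symmetric matrix N(H) restricted to C collapses in characteristic 2
   to its diagonal sum_(x in C) s(x)^2 = sum_(x in C) s(x), and the only
   surviving term outside C is s(u) s(w).  Hence s(u) s(w) = 0. *)

From mathcomp Require Import all_boot all_order all_algebra finfield.
Set Implicit Arguments.
Unset Strict Implicit.
Unset Printing Implicit Defensive.
Local Open Scope ring_scope.
Import GRing.Theory.

Section Char2SymmetricSums.

Variable R : comNzRingType.
Hypothesis pcharR2 : 2 \in [pchar R].

Lemma sum_sym_pchar2 (T : Type) (r : seq T) (f : T -> T -> R) :
  (forall x y, f x y = f y x) ->
  \sum_(x <- r) \sum_(y <- r) f x y = \sum_(x <- r) f x x.
Proof.
move=> fC; elim: r => [|a r IHr]; first by rewrite !big_nil.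
rewrite big_cons; under eq_bigr => x _ do rewrite big_cons.
rewrite big_cons big_split /= IHr [RHS]big_cons -!addrA; congr (_ + _).
rewrite addrA [X in _ + X + _](eq_bigr (fun y => f a y)) => [|y _]; last first.
  exact: fC.
by rewrite addrr_pchar2 // add0r.
Qed.

Lemma quadratic_form_split (n : nat) (N : 'M[R]_n) (C : {pred 'I_n})
    (t : 'I_n -> R) :
  N^T = N ->
  \sum_(x in C) t x * \sum_y N x y * t y =
  \sum_(x in C) N x x * t x ^+ 2
  + \sum_(x in C) \sum_(y | y \notin C) t x * N x y * t y.
Proof.
move=> Nsym.
under eq_bigr => x _ do rewrite (bigID (mem C)) /= mulrDr !big_distrr /=.
rewrite big_split /=; congr (_ + _); last first.
  by apply: eq_bigr => x _; apply: eq_bigr => y _; rewrite mulrA.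
rewrite -big_enum; under eq_bigr => x _ do rewrite -big_enum.
rewrite (sum_sym_pchar2 _ (f := fun x y => t x * (N x y * t y))) => [|x y].
  by rewrite big_enum; apply: eq_bigr => x _; rewrite mulrCA expr2.
by rewrite -{1}Nsym mxE mulrC -mulrA [RHS]mulrCA.
Qed.

End Char2SymmetricSums.

Section CutEdge.

Variables (n : nat) (g : rel 'I_n) (u w : 'I_n).
Hypothesis gsym : symmetric g.

Local Notation g' := (delete_edge g u w).

Lemma delete_edge_sym : symmetric g'.
Proof.
move=> x y; rewrite /delete_edge gsym; congr (_ && ~~ _).
by rewrite orbC; congr (_ || _); rewrite andbC.
Qed.

Lemma connect_delete_edge : g u w -> connect g' u w -> connect g =2 connect g'.
Proof.
move=> guw cuw x y; apply/idP/idP; last first.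
  by apply: connect_sub => a b /andP[gab _]; apply: connect1.
apply: connect_sub => a b gab; case g'ab: (g' a b); first exact: connect1.
move: g'ab; rewrite /delete_edge gab /= => /negbFE.
case/orP => /andP[/eqP -> /eqP ->] //.
by rewrite (sym_connect_sym delete_edge_sym).
Qed.

Lemma cut_edge_disconnects : cut_edge g u w -> ~~ connect g' u w.
Proof.
case=> guw; apply: contraTN => cuw; rewrite -leqNgt /num_components.
suff eq_comp : component g =1 component g' by rewrite (eq_imset _ eq_comp).
by move=> x; apply/setP => y; rewrite !inE (connect_delete_edge guw cuw).
Qed.

Lemma edge_out_of_component x y : ~~ connect g' u w ->
  x \in component g' u -> y \notin component g' u -> g x y ->
  (x == u) && (y == w).
Proof.
rewrite !inE => nuw ux uy gxy; apply: contraNT uy => xy_ne_uw.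
apply: connect_trans (ux) (connect1 _).
rewrite /delete_edge gxy negb_or xy_ne_uw /=.
by apply: contraNN nuw => /andP[/eqP xw _]; rewrite xw in ux.
Qed.

Lemma closed_adj_out_of_component x y : cut_edge g u w ->
  x \in component g' u -> y \notin component g' u ->
  closed_adj g x y = ((x == u) && (y == w))%:R.
Proof.
move=> cut ux uy; rewrite mxE.
case: eqP => [xy | _ /=]; first by rewrite -xy ux in uy.
have nuw := cut_edge_disconnects cut.
case gxy: (g x y); first by rewrite (edge_out_of_component nuw ux uy gxy).
case: cut => guw _; case: eqP gxy => // -> /=.
by case: eqP => // ->; rewrite guw.
Qed.

Lemma closed_adj_cut_sum (t : 'I_n -> 'F_2) : cut_edge g u w ->
  \sum_(x in component g' u) \sum_(y | y \notin component g' u)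
     t x * closed_adj g x y * t y = t u * t w.
Proof.
move=> cut; set C := component g' u.
have uC : u \in C by rewrite inE connect0.
have wC : w \notin C by rewrite inE cut_edge_disconnects.
under eq_bigr => x xC do under eq_bigr => y yC do
  rewrite (closed_adj_out_of_component cut xC yC).
rewrite (bigD1 u) //= addrC big1 ?add0r => [|x /andP[_ /negbTE xu]]; last first.
  by apply: big1 => y _; rewrite xu mulr0 mul0r.
rewrite (bigD1 w) //= addrC big1 ?add0r => [|y /andP[_ /negbTE yw]]; last first.
  by rewrite yw andbF mulr0 mul0r.
by rewrite !eqxx mulr1.
Qed.

End CutEdge.

Lemma F2_sqr (x : 'F_2) : x ^+ 2 = x.
Proof. by rewrite -{2}(expf_card x) card_Fp. Qed.

Theorem lemma3p1 (n : nat) (g : rel 'I_n) (u w : 'I_n)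
  (Hg : simple_graph g) (Hcut : cut_edge g u w)
  (s : 'cV['F_2]_n) (Hs : closed_adj g *m s = const_mx 1) :
  s u 0 = 0 \/ s w 0 = 0.
Proof.
case: Hg => gsym _; set C := component (delete_edge g u w) u.
set N := closed_adj g; set t := fun x => s x 0.
have Nsym : N^T = N by apply/matrixP => x y; rewrite !mxE eq_sym gsym.
have N_row x : \sum_y N x y * t y = 1.
  by have /matrixP/(_ x 0) := Hs; rewrite !mxE.
have := quadratic_form_split (pchar_Fp (isT : prime 2)) C t Nsym.
under eq_bigr => x _ do rewrite N_row mulr1.
under [in RHS]eq_bigr => x _ do rewrite /N mxE eqxx mul1r F2_sqr.
rewrite (closed_adj_cut_sum gsym t Hcut) -{1}[\sum_(x in C) t x]addr0.
move=> /addrI/esym/eqP.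
by rewrite mulf_eq0 => /orP[] /eqP; [left | right].
Qed.
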